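(* Every Bernstein set $B\subseteq\mathbb R^2$ is a $2$-I-covering.
   Context: A set $B\subseteq\mathbb R^2$ is a Bernstein set if for every uncountable Borel $Z\subseteq\mathbb R^2$ both $Z\cap B$ and $Z\setminus B$ are nonempty. A set $A\subseteq\mathbb R^2$ is a $2$-I-covering if for every $C\subseteq\mathbb R^2$ with $|C|=2$ there is an isometry $\phi$ of the Euclidean plane with $\phi[C]\subseteq A$. *)

(* The plane R^2 is modelled as R * R for R : realType,
   with its product (= Euclidean) topology. *)
From HB Require Import structures.
From mathcomp Require Import all_boot all_order all_algebra.
From mathcomp Require Import all_classical all_reals all_analysis.
Set Implicit Arguments. Unset Strict Implicit. Unset Printing Implicit Defensive.
Import numFieldNormedType.Exports.
Import Order.TTheory GRing.Theory Num.Theory.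
Local Open Scope classical_set_scope.
Local Open Scope ring_scope.

Definition sqdist (R : realType) (p q : R * R) : R :=
  (p.1 - q.1) ^+ 2 + (p.2 - q.2) ^+ 2.

Definition plane_isometry (R : realType) (phi : R * R -> R * R) : Prop :=
  bijective phi /\ forall p q : R * R, sqdist (phi p) (phi q) = sqdist p q.

Definition borel2 (R : realType) (Z : set (R * R)) : Prop :=
  <<s [set: R * R], [set U : set (R * R) | open U] >> Z.

Definition bernstein (R : realType) (B : set (R * R)) : Prop :=
  forall Z : set (R * R), borel2 Z -> ~ countable Z ->
    (Z `&` B !=set0) /\ (Z `\` B !=set0).

Definition card2 (T : Type) (C : set T) : Prop :=
  exists a b : T, a <> b /\ C = [set a; b].

Definition two_I_covering (R : realType) (A : set (R * R)) : Prop :=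
  forall C : set (R * R), card2 C ->
    exists phi : R * R -> R * R, plane_isometry phi /\ phi @` C `<=` A.

(** Circles of positive radius are closed, hence Borel, and uncountable, so a
    Bernstein set meets every one of them.  Given [a <> b], pick [p] in [B] on
    some circle, then [q] in [B] on the circle of radius [|a - b|] around [p];
    a rotation about [a] followed by the translation [a |-> p] maps [a] to [p]
    and [b] to [q]. *)
From HB Require Import structures.
From mathcomp Require Import all_boot all_order all_algebra.
From mathcomp Require Import all_classical all_reals all_analysis.
From mathcomp Require Import lra ring.
Import numFieldNormedType.Exports.
Import Order.TTheory GRing.Theory Num.Theory.
Local Open Scope classical_set_scope.
Local Open Scope ring_scope.

Section Plane.
Context {R : realType}.
Implicit Types (p q x y : R * R) (d c s : R).

Lemma sqdistC p q : sqdist p q = sqdist q p.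
Proof. by rewrite /sqdist; ring. Qed.

Lemma sqdist_gt0 {p q} : p <> q -> 0 < sqdist p q.
Proof.
move=> pq; rewrite lt_neqAle addr_ge0 ?sqr_ge0 // andbT eq_sym.
apply/negP; rewrite paddr_eq0 ?sqr_ge0 // !sqrf_eq0 !subr_eq0 => /andP[/eqP e1 /eqP e2].
by apply: pq; case: p q e1 e2 => [? ?] [? ?] /= -> ->.
Qed.

Lemma continuous_sqdist q : continuous (fun x : R * R => sqdist x q).
Proof.
have c1 : continuous (fun x : R * R => x.1 - q.1).
  by move=> x; apply: (@continuousB _ _ _ fst (fun=> q.1)); [exact: cvg_fst | exact: cst_continuous].
have c2 : continuous (fun x : R * R => x.2 - q.2).
  by move=> x; apply: (@continuousB _ _ _ snd (fun=> q.2)); [exact: cvg_snd | exact: cst_continuous].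
move=> x; exact: (@continuousD _ _ _ (fun x : R * R => (x.1 - q.1) ^+ 2)
  (fun x : R * R => (x.2 - q.2) ^+ 2) x
  (continuousM (c1 x) (c1 x)) (continuousM (c2 x) (c2 x))).
Qed.

(** [d] is the squared radius. *)
Definition circle q d := [set x | sqdist x q = d].

Lemma closed_circle q d : closed (circle q d).
Proof.
exact: (proj1 (continuous_closedP _) (continuous_sqdist q) [set y | y = d] (@closed_eq _ d)).
Qed.

Lemma borel2_closed {A : set (R * R)} : closed A -> borel2 A.
Proof.
move=> cA; have [_ borelD _] :=
  @smallest_sigma_algebra _ [set: R * R] [set U : set (R * R) | open U].
rewrite -[A]setCK -setTD; apply: borelD.
exact: sub_gen_smallest (closed_openC cA).
Qed.

Lemma ball_uncountable (x : R) {r : R} : 0 < r -> ~ countable (ball x r).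
Proof.
move=> r0 /countable_lebesgue_measure0; rewrite lebesgue_measure_ball ?ltW //.
by case; rewrite mulr2n; lra.
Qed.

Lemma circle_uncountable q {d} : 0 < d -> ~ countable (circle q d).
Proof.
move=> d_gt0 /countable_injP[g g_inj].
pose r := Num.sqrt d.
have r_gt0 : 0 < r by rewrite sqrtr_gt0.
pose f (t : R) : R * R := (q.1 + t, q.2 + Num.sqrt (d - t ^+ 2)).
have f_circle t : ball 0 r t -> circle q d (f t).
  rewrite /ball /= sub0r normrN => tr.
  have t2 : t ^+ 2 < d.
    have n0 := normr_ge0 t; rewrite -real_normK ?num_real // -[d]sqr_sqrtr ?ltW //.
    by rewrite -/r; nra.
  rewrite /circle /sqdist /f /= (addrC q.1) (addrC q.2) !addrK sqr_sqrtr; lra.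
apply: (ball_uncountable 0 r_gt0); apply/countable_injP.
exists (g \o f) => s t /set_mem bs /set_mem bt /= /g_inj.
by rewrite !inE => /(_ (f_circle _ bs) (f_circle _ bt)) [/addrI].
Qed.

(** Rotation by the angle with cosine [c] and sine [s] about [a], followed by
    the translation taking [a] to [p]. *)
Definition rigid_motion c s (a p x : R * R) : R * R :=
  (p.1 + (c * (x.1 - a.1) - s * (x.2 - a.2)),
   p.2 + (s * (x.1 - a.1) + c * (x.2 - a.2))).

Lemma rigid_motionK c s a p : c ^+ 2 + s ^+ 2 = 1 ->
  cancel (rigid_motion c s a p) (rigid_motion c (- s) p a).
Proof.
move=> unit_cs [x1 x2]; rewrite /rigid_motion /=; congr (_, _).
  transitivity (a.1 + (c ^+ 2 + s ^+ 2) * (x1 - a.1)); first by ring.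
  by rewrite unit_cs mul1r addrC subrK.
transitivity (a.2 + (c ^+ 2 + s ^+ 2) * (x2 - a.2)); first by ring.
by rewrite unit_cs mul1r addrC subrK.
Qed.

Lemma plane_isometry_rigid_motion c s a p : c ^+ 2 + s ^+ 2 = 1 ->
  plane_isometry (rigid_motion c s a p).
Proof.
move=> unit_cs; split.
  exists (rigid_motion c (- s) p a); first exact: rigid_motionK.
  by rewrite -{2}(opprK s); apply: rigid_motionK; rewrite sqrrN.
move=> x y; rewrite /sqdist /= -[RHS]mul1r -unit_cs; ring.
Qed.

Lemma rigid_motion_center c s a p : rigid_motion c s a p a = p.
Proof. by rewrite /rigid_motion !subrr !mulr0 subr0 !addr0; case: p. Qed.

(** The rotation taking [b - a] to [q - p]; its cosine and sine are the scalar
    and cross products of the two vectors divided by their common squared length. *)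
Lemma rigid_motion_transport {a b p q} : a <> b -> sqdist p q = sqdist a b ->
  exists c s, c ^+ 2 + s ^+ 2 = 1 /\ rigid_motion c s a p b = q.
Proof.
move=> ab pq; set u1 := b.1 - a.1; set u2 := b.2 - a.2.
set v1 := q.1 - p.1; set v2 := q.2 - p.2.
have D0 : u1 ^+ 2 + u2 ^+ 2 != 0 by rewrite gt_eqF // sqdist_gt0 // => /esym.
have vu : v1 ^+ 2 + v2 ^+ 2 = u1 ^+ 2 + u2 ^+ 2 by rewrite [LHS]sqdistC pq sqdistC.
pose c := (u1 * v1 + u2 * v2) / (u1 ^+ 2 + u2 ^+ 2).
pose s := (u1 * v2 - u2 * v1) / (u1 ^+ 2 + u2 ^+ 2).
exists c, s; split.
  transitivity ((u1 ^+ 2 + u2 ^+ 2) * (v1 ^+ 2 + v2 ^+ 2) / (u1 ^+ 2 + u2 ^+ 2) ^+ 2).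
    by rewrite /c /s; field.
  by rewrite vu; field.
have rot1 : c * u1 - s * u2 = v1 by rewrite /c /s; field.
have rot2 : s * u1 + c * u2 = v2 by rewrite /c /s; field.
rewrite /rigid_motion -/u1 -/u2 rot1 rot2 /v1 /v2 (addrC p.1) (addrC p.2) !subrK.
by case: q {pq vu v1 v2 c s rot1 rot2}.
Qed.

Lemma plane_isometry_transport {a b p q} : a <> b -> sqdist p q = sqdist a b ->
  exists phi, plane_isometry phi /\ phi a = p /\ phi b = q.
Proof.
move=> ab pq; have [c [s [cs bq]]] := rigid_motion_transport ab pq.
exists (rigid_motion c s a p); split; first exact: plane_isometry_rigid_motion.
by rewrite rigid_motion_center.
Qed.

Lemma bernstein_meets_circle {B : set (R * R)} q {d} :
  bernstein B -> 0 < d -> exists2 p, circle q d p & B p.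
Proof.
move=> hB d_gt0; have [[p [cp Bp]] _] :=
  hB _ (borel2_closed (closed_circle q d)) (circle_uncountable q d_gt0).
by exists p.
Qed.

End Plane.

Theorem mainTheorem16 (R : realType) (B : set (R * R)) :
  bernstein B -> two_I_covering B.
Proof.
move=> hB _ [a [b [ab ->]]].
have [p _ Bp] := bernstein_meets_circle (0, 0) hB ltr01.
have [q qp Bq] := bernstein_meets_circle p hB (sqdist_gt0 ab).
have pq : sqdist p q = sqdist a b by rewrite sqdistC.
have [phi [iso [pa pb]]] := plane_isometry_transport ab pq.
exists phi; split => // _ [x [->|->] <-]; by rewrite ?pa ?pb.
Qed.
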